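(* Let $f\colon X\to Y$ be a surjective morphism of non-degenerate cycle sets. Then there is a unique brace morphism $A(f)\colon A(X)\to A(Y)$ such that $A(f)\circ\sigma_X=\sigma_Y\circ f$, where $\sigma_X\colon X\to A(X)$ and $\sigma_Y\colon Y\to A(Y)$ are the canonical maps; moreover $A(f)$ is surjective.
   Context: A cycle set is a set $X$ with a binary operation $\cdot$ such that for every $x\in X$ the map $y\mapsto x\cdot y$ is a bijection of $X$, and $(x\cdot y)\cdot(x\cdot z)=(y\cdot x)\cdot(y\cdot z)$ for all $x,y,z$. It is non-degenerate if the map $x\mapsto x\cdot x$ is bijective. A morphism of cycle sets is a map $f$ with $f(x\cdot y)=f(x)\cdot f(y)$. A brace is an abelian group $(A,+)$ with a binary operation $\cdot$ making $A$ a cycle set and satisfying $a\cdot(b+c)=(a\cdot b)+(a\cdot c)$ and $(a+b)\cdot c=(a\cdot b)\cdot(a\cdot c)$; a brace morphism is an additive homomorphism preserving $\cdot$. For a non-degenerate cycle set $X$, $A_X$ denotes the unique brace structure on the free abelian group $\mathbb{Z}^{(X)}$ extending the operation of $X$. The socle of a brace $A$ is $\mathrm{Soc}(A)=\{a\in A: a\cdot b=b \text{ for all } b\in A\}$; it is an ideal, so $A/\mathrm{Soc}(A)$ is a brace. Set $A(X):=A_X/\mathrm{Soc}(A_X)$ and let $\sigma_X\colon X\to A(X)$ be the composite of the inclusion $X\hookrightarrow A_X$ with the quotient map. *)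

From HB Require Import structures.
From mathcomp Require Import all_boot all_algebra.
Set Implicit Arguments. Unset Strict Implicit. Unset Printing Implicit Defensive.
Import GRing.Theory.
Local Open Scope ring_scope.

Definition surj (A B : Type) (f : A -> B) : Prop := forall b, exists a, f a = b.

Definition is_cycle_set (X : Type) (op : X -> X -> X) : Prop :=
  (forall x, bijective (op x)) /\
  (forall x y z, op (op x y) (op x z) = op (op y x) (op y z)).

Definition non_degenerate (X : Type) (op : X -> X -> X) : Prop :=
  bijective (fun x => op x x).

Definition cs_morphism (X Y : Type) (opX : X -> X -> X) (opY : Y -> Y -> Y)
  (f : X -> Y) : Prop := forall x y, f (opX x y) = opY (f x) (f y).

Definition is_brace (A : zmodType) (op : A -> A -> A) : Prop :=
  [/\ is_cycle_set op,
      (forall a b c, op a (b + c) = op a b + op a c) &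
      (forall a b c, op (a + b) c = op (op a b) (op a c))].

Definition brace_morphism (A B : zmodType) (opA : A -> A -> A)
  (opB : B -> B -> B) (g : A -> B) : Prop :=
  (forall a b, g (a + b) = g a + g b) /\ cs_morphism opA opB g.

Definition socle (A : zmodType) (op : A -> A -> A) (a : A) : Prop :=
  forall b, op a b = b.

Definition free_abelian_on (X : Type) (A : zmodType) (i : X -> A) : Prop :=
  forall (M : zmodType) (h : X -> M),
    exists g : A -> M,
      ((forall a b, g (a + b) = g a + g b) /\ (forall x, g (i x) = h x)) /\
      (forall g' : A -> M,
         (forall a b, g' (a + b) = g' a + g' b) -> (forall x, g' (i x) = h x) ->
         g' = g).

(* (A, opA, i) is the brace A_X: a brace structure on the free abelian group
   Z^(X) (with basis i(X)) extending the operation of X. *)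
Definition is_A_X (X : Type) (opX : X -> X -> X)
  (A : zmodType) (opA : A -> A -> A) (i : X -> A) : Prop :=
  [/\ free_abelian_on i, is_brace opA &
      (forall x y, i (opX x y) = opA (i x) (i y))].

(* (Q, opQ, p) is the quotient brace A / Soc(A): p is a surjective brace
   morphism onto the brace Q whose kernel is exactly Soc(A). *)
Definition is_socle_quotient (A : zmodType) (opA : A -> A -> A)
  (Q : zmodType) (opQ : Q -> Q -> Q) (p : A -> Q) : Prop :=
  [/\ is_brace opQ, brace_morphism opA opQ p, surj p &
      (forall a, p a = 0 <-> socle opA a)].

(* The additive extension F : A_X -> A_Y of X -> Y -> A_Y respects the brace
   operation.  Since (a + g).c = (a.g).(a.c), it suffices to check this on the
   generators +-x, provided the action of A_X preserves them; it does, because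
   x.y lies in X and, writing x = w.w by non-degeneracy, -x acts as the inverse
   of w, so (-x).y lies in X too.  As f is onto, so is F, and a surjective
   brace morphism maps socle into socle; hence F descends to A(X) -> A(Y),
   uniquely because X generates A(X). *)
From HB Require Import structures.
From mathcomp Require Import all_boot all_algebra boolp.
Set Implicit Arguments. Unset Strict Implicit. Unset Printing Implicit Defensive.
Import GRing.Theory.
Local Open Scope ring_scope.

Section Additive.
Variables (A B : zmodType) (g : A -> B).
Hypothesis gD : {morph g : a b / a + b}.

Lemma additive0 : g 0 = 0.
Proof. by apply: (@addrI _ (g 0)); rewrite -gD !addr0. Qed.

Lemma additiveN a : g (- a) = - g a.
Proof. by apply/eqP; rewrite -addr_eq0 -gD addNr additive0. Qed.

Lemma additiveB a b : g (a - b) = g a - g b.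
Proof. by rewrite gD additiveN. Qed.

End Additive.

Section BraceTheory.
Variables (A : zmodType) (op : A -> A -> A).
Hypothesis hA : is_brace op.

Lemma brace_opDr a : {morph op a : b c / b + c}.
Proof. by case: hA => _ opD _ b c; apply: opD. Qed.

Lemma brace_opDl a b c : op (a + b) c = op (op a b) (op a c).
Proof. by case: hA. Qed.

Lemma brace_opr0 a : op a 0 = 0.
Proof. exact: (additive0 (brace_opDr a)). Qed.

Lemma brace_oprN a b : op a (- b) = - op a b.
Proof. exact: (additiveN (brace_opDr a) b). Qed.

Lemma brace_op0l c : op 0 c = c.
Proof.
case: hA => -[op_bij _] _ _; apply: (bij_inj (op_bij 0)).
by rewrite -{3}[0 : A]addr0 brace_opDl brace_opr0.
Qed.

Lemma brace_opNsq a c : op (- op a a) (op a c) = c.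
Proof. by rewrite -brace_oprN -brace_opDl addrN brace_op0l. Qed.

End BraceTheory.

Definition spans (A : zmodType) (S : A -> Prop) : Prop :=
  forall Q : A -> Prop,
    Q 0 -> (forall a g, S g -> Q a -> Q (a + g)) -> forall a, Q a.

Definition signed_image (X : Type) (A : zmodType) (i : X -> A) (g : A) : Prop :=
  exists x, g = i x \/ g = - i x.

Section FreeAbelian.
Variables (X : Type) (A : zmodType) (i : X -> A).
Hypothesis frA : free_abelian_on i.

Lemma free_abelian_on_eq (M : zmodType) (g1 g2 : A -> M) :
  {morph g1 : a b / a + b} -> {morph g2 : a b / a + b} ->
  (forall x, g1 (i x) = g2 (i x)) -> g1 = g2.
Proof.
move=> g1D g2D g12; have [g [_ g_unique]] := frA (g2 \o i).
by rewrite (g_unique g1) // (g_unique g2).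
Qed.

Section Subgroup.
Variables (P : pred A) (P_closed : zmod_closed P).

Let subgroup := {a : A | P a}.
HB.instance Definition _ := [isSub for @sval A (fun a => P a) : subgroup -> A].
HB.instance Definition _ := [Choice of subgroup by <:].
HB.instance Definition _ :=
  GRing.SubChoice_isSubZmodule.Build A P subgroup P_closed.

Lemma free_abelian_subgroup : (forall x, P (i x)) -> forall a, P a.
Proof.
move=> Pi a; have [g [[gD gi] _]] := frA (fun x => Sub (i x) (Pi x) : subgroup).
have -> : a = val (g a).
  rewrite -[LHS]/(id a) (@free_abelian_on_eq _ id (val \o g)) //
    => [b c | x] /=.
    by rewrite gD.
  by rewrite gi SubK.
exact: valP.
Qed.

End Subgroup.

Lemma free_abelian_quotient_eq (Q M : zmodType) (p : A -> Q) (g1 g2 : Q -> M) :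
  {morph p : a b / a + b} -> surj p ->
  {morph g1 : a b / a + b} -> {morph g2 : a b / a + b} ->
  (forall x, g1 (p (i x)) = g2 (p (i x))) -> g1 = g2.
Proof.
move=> pD ps g1D g2D g12; apply: funext => q; have [a <-] := ps q.
have g1pD : {morph g1 \o p : a b / a + b} by move=> b c; rewrite /= pD g1D.
have g2pD : {morph g2 \o p : a b / a + b} by move=> b c; rewrite /= pD g2D.
exact: (congr1 (fun k => k a) (free_abelian_on_eq g1pD g2pD g12)).
Qed.

Lemma free_abelian_spans : spans (signed_image i).
Proof.
move=> Q Q0 QS.
(* Q need not be a subgroup, but its stabiliser under +-translation is. *)
pose R := [pred a | `[< forall b, Q b -> Q (b + a) /\ Q (b - a) >]].
have R_closed : zmod_closed R.
  split; first by apply/asboolP => b Qb; rewrite addr0 subr0.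
  move=> a c /asboolP Ra /asboolP Rc; apply/asboolP => b Qb; split.
    by rewrite addrA; apply: (Rc _ (Ra _ Qb).1).2.
  by rewrite opprB addrA; apply: (Ra _ (Rc _ Qb).1).2.
have Ri x : R (i x).
  by apply/asboolP => b Qb; split; apply: QS Qb; exists x; [left | right].
move=> a; have /asboolP/(_ 0 Q0)[] := free_abelian_subgroup R_closed Ri a.
by rewrite add0r.
Qed.

End FreeAbelian.

Section OpMorphismOfSpan.
Variables (A B : zmodType) (opA : A -> A -> A) (opB : B -> B -> B).
Hypotheses (hA : is_brace opA) (hB : is_brace opB).
Variables (S : A -> Prop) (F : A -> B).
Hypotheses (spanS : spans S) (opS : forall a g, S g -> S (opA a g)).
Hypothesis FD : {morph F : a b / a + b}.
Hypothesis FS : forall g h, S g -> S h -> F (opA g h) = opB (F g) (F h).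

Lemma op_morph_spanl g c : S g -> F (opA g c) = opB (F g) (F c).
Proof.
move=> Sg; elim/spanS: c => [|c h Sh IHc].
  by rewrite (brace_opr0 hA) (additive0 FD) (brace_opr0 hB).
by rewrite (brace_opDr hA) !FD IHc FS // (brace_opDr hB).
Qed.

Lemma op_morph_span : cs_morphism opA opB F.
Proof.
move=> a; elim/spanS: a => [|a g Sg IHa] c.
  by rewrite (brace_op0l hA) (additive0 FD) (brace_op0l hB).
rewrite (brace_opDl hA) op_morph_spanl; last exact: opS.
by rewrite !IHa FD (brace_opDl hB).
Qed.

End OpMorphismOfSpan.

Section FreeExtension.
Variables (X : Type) (opX : X -> X -> X).
Hypotheses (hX : is_cycle_set opX) (ndX : non_degenerate opX).

(* With x = w.w and y = w.e, brace_opNsq gives (-x).y = e in any brace. *)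
Lemma nondegenerate_opN x y : exists e,
  forall (B : zmodType) (opB : B -> B -> B) (j : X -> B),
    is_brace opB -> cs_morphism opX opB j -> opB (- j x) (j y) = j e.
Proof.
have [w _ sq_w] := ndX; have [sigma_w _ sigma_wK] := hX.1 (w x).
exists (sigma_w y) => B opB j hB hj.
by rewrite -{1}(sq_w x) -{1}(sigma_wK y) /= !hj (brace_opNsq hB).
Qed.

Variables (A B : zmodType) (opA : A -> A -> A) (opB : B -> B -> B).
Hypotheses (hA : is_brace opA) (hB : is_brace opB).
Variables (i : X -> A) (j : X -> B).
Hypotheses (hi : cs_morphism opX opA i) (hj : cs_morphism opX opB j).
Hypothesis spanA : spans (signed_image i).

Lemma op_image a x : exists y, opA a (i x) = i y.
Proof.
elim/spanA: a x => [|a g [z Hg] IHa] x.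
  by exists x; rewrite (brace_op0l hA).
have [x1 Ex1] := IHa x; have [z1 Ez1] := IHa z.
rewrite (brace_opDl hA) Ex1; case: Hg => ->; rewrite ?(brace_oprN hA) Ez1.
  by exists (opX z1 x1); rewrite hi.
by have [e He] := nondegenerate_opN z1 x1; exists e; apply: He.
Qed.

Lemma op_signed_image a g : signed_image i g -> signed_image i (opA a g).
Proof.
case=> x Hg; have [y Ey] := op_image a x; exists y.
by case: Hg => ->; [left | right]; rewrite ?(brace_oprN hA) Ey.
Qed.

Variable F : A -> B.
Hypotheses (FD : {morph F : a b / a + b}) (Fi : forall x, F (i x) = j x).

Lemma free_extension_op_signed g h : signed_image i g -> signed_image i h ->
  F (opA g h) = opB (F g) (F h).
Proof.
move=> [x Hg] [y Hh].
suff Fgy : F (opA g (i y)) = opB (F g) (F (i y)).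
  case: Hh => ->; first exact: Fgy.
  by rewrite (brace_oprN hA) !(additiveN FD) (brace_oprN hB) Fgy.
case: Hg => ->; rewrite ?(additiveN FD) !Fi; first by rewrite -hi Fi hj.
have [e He] := nondegenerate_opN x y.
by rewrite (He _ _ _ hA hi) (He _ _ _ hB hj) Fi.
Qed.

Lemma free_extension_op_morph : cs_morphism opA opB F.
Proof.
exact: (op_morph_span hA hB spanA op_signed_image FD free_extension_op_signed).
Qed.

End FreeExtension.

Lemma additive_surj_span (A B : zmodType) (S : B -> Prop) (F : A -> B) :
  spans S -> {morph F : a b / a + b} -> (forall g, S g -> exists a, F a = g) ->
  surj F.
Proof.
move=> spanS FD FS; elim/spanS => [|_ g Sg [a <-]].
  by exists 0; rewrite (additive0 FD).
by have [a' <-] := FS g Sg; exists (a + a'); rewrite FD.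
Qed.

Lemma socle_surj_morph (A B : zmodType) (opA : A -> A -> A) (opB : B -> B -> B)
    (F : A -> B) (s : A) :
  cs_morphism opA opB F -> surj F -> socle opA s -> socle opB (F s).
Proof. by move=> Fop Fs s_soc b; have [a <-] := Fs b; rewrite -Fop s_soc. Qed.

Lemma brace_morphism_factor (A Q B : zmodType) (opA : A -> A -> A)
    (opQ : Q -> Q -> Q) (opB : B -> B -> B) (p : A -> Q) (h : A -> B) :
  brace_morphism opA opQ p -> brace_morphism opA opB h -> surj p ->
  (forall a, p a = 0 -> h a = 0) ->
  exists g : Q -> B, brace_morphism opQ opB g /\ forall a, g (p a) = h a.
Proof.
move=> [pD pop] [hD hop] ps ker_ph.
have ps' q : exists a, p a == q by have [a <-] := ps q; exists a.
pose g q := h (xchoose (ps' q)).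
have gp a : g (p a) = h a.
  apply/eqP; rewrite -subr_eq0 -(additiveB hD); apply/eqP/ker_ph.
  by rewrite (additiveB pD) (eqP (xchooseP (ps' (p a)))) subrr.
exists g; split=> [|//]; split=> q1 q2.
  by have [a1 <-] := ps q1; have [a2 <-] := ps q2; rewrite -pD !gp hD.
by have [a1 <-] := ps q1; have [a2 <-] := ps q2; rewrite -pop !gp hop.
Qed.

Theorem mainTheorem4
  (X Y : Type) (opX : X -> X -> X) (opY : Y -> Y -> Y)
  (hX : is_cycle_set opX) (ndX : non_degenerate opX)
  (hY : is_cycle_set opY) (ndY : non_degenerate opY)
  (f : X -> Y) (hf : cs_morphism opX opY f) (sf : surj f)
  (AX : zmodType) (opAX : AX -> AX -> AX) (iX : X -> AX)
  (hAX : is_A_X opX opAX iX)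
  (QX : zmodType) (opQX : QX -> QX -> QX) (pX : AX -> QX)
  (hQX : is_socle_quotient opAX opQX pX)
  (AY : zmodType) (opAY : AY -> AY -> AY) (iY : Y -> AY)
  (hAY : is_A_X opY opAY iY)
  (QY : zmodType) (opQY : QY -> QY -> QY) (pY : AY -> QY)
  (hQY : is_socle_quotient opAY opQY pY) :
  exists Af : QX -> QY,
    [/\ brace_morphism opQX opQY Af,
        (forall x, Af (pX (iX x)) = pY (iY (f x))),
        (forall g : QX -> QY, brace_morphism opQX opQY g ->
           (forall x, g (pX (iX x)) = pY (iY (f x))) -> g = Af) &
        surj Af].
Proof.
case: hAX => frX bAX iXop; case: hAY => frY bAY iYop.
case: hQX => _ pXM pXs pX_ker; case: hQY => _ [pYD pYop] pYs pY_ker.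
have [F [[FD Fi] _]] := frX AY (iY \o f).
have jop : cs_morphism opX opAY (iY \o f) by move=> x y; rewrite /= hf iYop.
have Fop := free_extension_op_morph hX ndX bAX bAY iXop jop
  (free_abelian_spans frX) FD Fi.
have Fs : surj F.
  apply: (additive_surj_span (free_abelian_spans frY) FD) => g [y Hy].
  have [x Ex] := sf y; case: Hy => ->; rewrite -Ex.
    by exists (iX x); rewrite Fi.
  by exists (- iX x); rewrite (additiveN FD) Fi.
have pYF : brace_morphism opAX opQY (pY \o F).
  by split=> a b /=; rewrite ?FD ?Fop ?pYD ?pYop.
have ker_pX_pYF a : pX a = 0 -> (pY \o F) a = 0.
  by move/pX_ker=> a_soc; apply/pY_ker/socle_surj_morph.
have [Af [AfM AfE]] := brace_morphism_factor pXM pYF pXs ker_pX_pYF.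
exists Af; split => //.
- by move=> x; rewrite AfE /= Fi.
- move=> g [gD _] gE.
  apply: (free_abelian_quotient_eq frX pXM.1 pXs gD AfM.1) => x.
  by rewrite gE AfE /= Fi.
- move=> q; have [b <-] := pYs q; have [a <-] := Fs b.
  by exists (pX a); rewrite AfE.
Qed.
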